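(* Let $\mathcal{G}$, $u$, $v$ be as in the context (finite bicoloured graph with both a pure green and a pure red path from $u$ to $v$, and with fixed weights). Then for every $r$ with $0\le r<r_{tot}$ there exists a red edge $e$ of $\mathcal{G}$ with $\Delta(r)=\Delta_e(r)$.
   Context: $\mathcal{G}=\langle V,E,\omega,\lambda\rangle$ is a finite weighted coloured--edge graph (directed multigraph, weights $\omega:E\to\mathbb{R}^+$, colours $\lambda:E\to M$) with $M=\{\text{red},\text{green}\}$. A path from $u$ to $v$ is a sequence of consecutive edges from $u$ to $v$ visiting no vertex twice; $\omega_{\text{red}}(p)$, $\omega_{\text{green}}(p)$ denote the sums of weights of the red, resp. green, edges of $p$. A path $p$ from $u$ to $v$ is minimal if there is no path $q$ from $u$ to $v$ with $\omega_{\text{red}}(q)\le\omega_{\text{red}}(p)$, $\omega_{\text{green}}(q)\le\omega_{\text{green}}(p)$ and at least one of these inequalities strict. It is assumed there is a path from $u$ to $v$ all of whose edges are green and a path from $u$ to $v$ all of whose edges are red; $r_{tot}$ is the least red weight of a path from $u$ to $v$ all of whose edges are red. For a red edge $e$ and $r\ge0$: $g_r$ is the least value of $\omega_{\text{green}}(p)$ over all paths $p$ from $u$ to $v$ not containing $e$ with $\omega_{\text{red}}(p)\le r$; $\Delta_e(r)$ is the least value of $\omega_{\text{red}}(q)$ over all paths $q$ from $u$ to $v$ containing $e$ with $\omega_{\text{green}}(q)<g_r$, or $\infty$ if no such path exists. For $0\le r<r_{tot}$, $\Delta(r)$ is the least value of $\omega_{\text{red}}(q)$ over all minimal paths $q$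 from $u$ to $v$ with $\omega_{\text{red}}(q)>r$ (so $\Delta(r)>r$). *)

From HB Require Import structures.
From mathcomp Require Import all_boot all_order all_algebra.
Set Implicit Arguments. Unset Strict Implicit. Unset Printing Implicit Defensive.
Import Order.TTheory GRing.Theory Num.Theory.
Local Open Scope ring_scope.

Inductive colour := Red | Green.
Definition is_red (c : colour) : bool := if c is Red then true else false.
Definition is_green (c : colour) : bool := if c is Green then true else false.

Section Graph.
Variables (R : realFieldType) (V E : finType) (src tgt : E -> V)
          (w : E -> R) (col : E -> colour).

Fixpoint walk (x y : V) (p : seq E) : bool :=
  match p with
  | [::] => x == y
  | e :: p' => (src e == x) && walk (tgt e) y p'
  end.

Definition is_path (u v : V) (p : seq E) : bool :=
  walk u v p && uniq (u :: map tgt p).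

Definition wred (p : seq E) : R := \sum_(e <- p | is_red (col e)) w e.
Definition wgreen (p : seq E) : R := \sum_(e <- p | is_green (col e)) w e.

Definition all_red (p : seq E) : bool := all (fun e => is_red (col e)) p.
Definition all_green (p : seq E) : bool := all (fun e => is_green (col e)) p.

Definition minimal_path (u v : V) (p : seq E) : Prop :=
  is_path u v p /\
  ~ (exists q, is_path u v q /\ wred q <= wred p /\ wgreen q <= wgreen p /\
               (wred q < wred p \/ wgreen q < wgreen p)).

Definition least (S : R -> Prop) (x : R) : Prop :=
  S x /\ forall y, S y -> x <= y.

Definition rtot_spec (u v : V) (rt : R) : Prop :=
  least (fun x => exists p, is_path u v p /\ all_red p /\ wred p = x) rt.

Definition g_spec (u v : V) (e : E) (r g : R) : Prop :=
  least (fun x => exists p, is_path u v p /\ e \notin p /\ wred p <= r /\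
                             wgreen p = x) g.

(* Delta_e(r), with None standing for infinity *)
Definition Delta_e_spec (u v : V) (e : E) (r : R) (d : option R) : Prop :=
  exists g, g_spec u v e r g /\
  let S := fun x => exists q, is_path u v q /\ e \in q /\ wgreen q < g /\
                               wred q = x in
  match d with
  | None => forall x, ~ S x
  | Some x => least S x
  end.

Definition Delta_spec (u v : V) (r d : R) : Prop :=
  least (fun x => exists q, minimal_path u v q /\ r < wred q /\ wred q = x) d.

End Graph.

(* Paths are duplicate-free edge sequences, so there are only
   finitely many of them and every nonempty family of paths has a member
   minimising any real-valued cost.  Fix
   - q*, a minimal path with red weight > r of least red weight, so that
     Delta(r) = wred q* (it exists: an optimal all-red path has red weight
     r_tot > r and is minimal);
   - p*, a path with red weight <= r of least green weight (it exists: the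
     all-green path has red weight 0 <= r).
   Then wgreen q* < wgreen p*, since otherwise p* would dominate q*.  As
   wred p* <= r < wred q*, some red edge e of q* is not on p*.  Since p*
   avoids e, g_r = wgreen p* for this e, so q* witnesses Delta_e(r) <= wred q*.
   Conversely a path q through e with wgreen q < g_r is dominated by a
   minimal path q'; wred q' <= r would give g_r <= wgreen q' < g_r, hence
   wred q' > r and wred q >= wred q' >= Delta(r). *)
From HB Require Import structures.
From mathcomp Require Import all_boot all_order all_algebra.
From mathcomp Require Import lra.
From Stdlib Require Import Classical_Prop.
Import Order.TTheory GRing.Theory Num.Theory.
Set Implicit Arguments. Unset Strict Implicit. Unset Printing Implicit Defensive.
Local Open Scope ring_scope.

Section FiniteMinimisation.
Variables (R : realFieldType) (T : eqType) (f : T -> R) (P : T -> Prop).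

Lemma list_minimiser (L : seq T) :
  (exists2 x, x \in L & P x) ->
  exists x, [/\ x \in L, P x & forall y, y \in L -> P y -> f x <= f y].
Proof.
elim: L => [|x L IH]; first by case.
move=> exPL.
have [Px|nPx] := classic (P x); last first.
  have [|m [mL Pm min_m]] := IH.
    by case: exPL => y; rewrite inE => /orP [/eqP->|yL] Py; [|exists y].
  exists m; split=> [||y]; rewrite ?inE ?mL ?orbT //.
  by case/orP=> [/eqP->|/min_m//].
have [[y yL Py]|noL] := classic (exists2 y, y \in L & P y); last first.
  exists x; split=> [||y]; rewrite ?inE ?eqxx //.
  by case/orP=> [/eqP->//|yL Py]; case: noL; exists y.
have [m [mL Pm min_m]] := IH (ex_intro2 _ _ y yL Py).
have [fxm|fmx] := lerP (f x) (f m).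
- exists x; split=> [||z]; rewrite ?inE ?eqxx //.
  by case/orP=> [/eqP->//|zL Pz]; exact: le_trans fxm (min_m z zL Pz).
- exists m; split=> [||z]; rewrite ?inE ?mL ?orbT //.
  by case/orP=> [/eqP->|/min_m//]; rewrite ltW.
Qed.
End FiniteMinimisation.

Fixpoint seqs_upto (E : finType) (n : nat) : seq (seq E) :=
  if n is n'.+1 then [::] :: [seq e :: s | e <- enum E, s <- seqs_upto E n']
  else [:: [::]].

Lemma mem_seqs_upto (E : finType) n (s : seq E) :
  (size s <= n)%N -> s \in seqs_upto E n.
Proof.
elim: n s => [|n IH] [|x s] //=; rewrite ?inE ?eqxx // => size_s.
by apply: (allpairs_f (fun e s => e :: s)); [rewrite mem_enum | exact: IH].
Qed.

Lemma uniq_minimiser (R : realFieldType) (E : finType) (P : seq E -> Prop)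
    (f : seq E -> R) :
  (forall p, P p -> uniq p) -> (exists p, P p) ->
  exists p, P p /\ forall q, P q -> f p <= f q.
Proof.
move=> P_uniq [p Pp].
have in_L q : P q -> q \in seqs_upto E #|E|.
  by move=> Pq; apply: mem_seqs_upto; rewrite -(card_uniqP (P_uniq q Pq)) max_card.
have [m [_ Pm min_m]] := list_minimiser f (ex_intro2 _ _ p (in_L p Pp) Pp).
by exists m; split=> // q Pq; apply: min_m (in_L q Pq) Pq.
Qed.

Section WeightedPaths.
Variables (R : realFieldType) (V E : finType) (src tgt : E -> V).
Variables (w : E -> R) (col : E -> colour) (u v : V).
Hypothesis w_pos : forall e, 0 < w e.

Local Notation path := (is_path src tgt u v).
Local Notation wr := (wred w col).
Local Notation wg := (wgreen w col).
Local Notation minimal := (minimal_path src tgt w col u v).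

(* A path visits no vertex twice, hence uses no edge twice. *)
Lemma path_uniq p : path p -> uniq p.
Proof. by case/andP=> _ /= /andP [_ /map_uniq]. Qed.

Lemma path_minimiser (P : seq E -> Prop) (f : seq E -> R) :
  (forall p, P p -> path p) -> (exists p, P p) ->
  exists p, P p /\ forall q, P q -> f p <= f q.
Proof. by move=> P_path; apply: uniq_minimiser => p /P_path /path_uniq. Qed.

Lemma wgreen_ge0 p : 0 <= wg p.
Proof. by apply: sumr_ge0 => e _; apply: ltW. Qed.

Lemma wgreen_eq0_all_red p : wg p = 0 -> all_red col p.
Proof.
elim: p => [|e p IH] //=; rewrite /wgreen big_cons -/(wgreen w col p).
case: (col e) => /= [/IH //|wg_e].
by have := w_pos e; have := wgreen_ge0 p; lra.
Qed.

Lemma all_red_wgreen p : all_red col p -> wg p = 0.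
Proof.
by move=> p_red; rewrite /wgreen big_seq_cond big1 // => e /andP [/(allP p_red)];
  case: (col e).
Qed.

Lemma all_green_wred p : all_green col p -> wr p = 0.
Proof.
by move=> p_green; rewrite /wred big_seq_cond big1 // => e /andP [/(allP p_green)];
  case: (col e).
Qed.

Lemma wred_le_red_subset p q :
  uniq p -> uniq q -> (forall e, e \in q -> is_red (col e) -> e \in p) ->
  wr q <= wr p.
Proof.
move=> p_uniq q_uniq red_sub.
rewrite /wred -(big_filter q) -(big_filter p) !big_uniq ?filter_uniq //.
rewrite [X in X <= _]big_mkcond [X in _ <= X]big_mkcond /=.
apply: ler_sum => e _; case: ifP => [|_]; last by case: ifP => _ //; apply: ltW.
by rewrite !mem_filter => /andP [e_red e_q]; rewrite e_red red_sub.
Qed.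

(* Every path is weakly dominated by a minimal path: take a dominating path
   of least total weight. *)
Lemma minimal_below q : path q ->
  exists q', [/\ minimal q', wr q' <= wr q & wg q' <= wg q].
Proof.
move=> q_path.
have [m [[m_path m_red m_green] min_m]] := path_minimiser
  (P := fun x => [/\ path x, wr x <= wr q & wg x <= wg q])
  (fun x => wr x + wg x) (fun x => fun '(And3 x_path _ _) => x_path)
  (ex_intro _ q (And3 q_path (lexx _) (lexx _))).
exists m; split=> //; split=> // -[z [z_path [z_red [z_green strict]]]].
have := min_m z (And3 z_path (le_trans z_red m_red) (le_trans z_green m_green)).
by case: strict; lra.
Qed.

(* A lightest all-red path is minimal: a path dominating it has green weight
   0, so is all red, so cannot be strictly lighter. *)
Lemma rtot_path_minimal rt p :
  rtot_spec src tgt w col u v rt -> path p -> all_red col p -> wr p = rt ->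
  minimal p.
Proof.
move=> [_ rt_least] p_path p_red p_rt; split=> // -[z [z_path [z_red [z_green strict]]]].
have z_green0 : wg z = 0.
  by apply/eqP; rewrite eq_le wgreen_ge0 andbT -(all_red_wgreen p_red).
have := rt_least _ (ex_intro _ z (conj z_path (conj (wgreen_eq0_all_red z_green0) erefl))).
by rewrite (all_red_wgreen p_red) in z_green strict *; case: strict; lra.
Qed.

Variable r : R.

Definition delta_path (q : seq E) : Prop :=
  [/\ minimal q, r < wr q & forall q', minimal q' -> r < wr q' -> wr q <= wr q'].

Definition green_optimal (p : seq E) : Prop :=
  [/\ path p, wr p <= r & forall p', path p' -> wr p' <= r -> wg p <= wg p'].

(* q* exists because an optimal all-red path is minimal and redder than r. *)
Lemma delta_path_exists rt :
  rtot_spec src tgt w col u v rt -> r < rt -> exists q, delta_path q.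
Proof.
move=> rt_spec r_lt; have [[p0 [p0_path [p0_red p0_rt]]] _] := rt_spec.
have p0_min := rtot_path_minimal rt_spec p0_path p0_red p0_rt.
have p0_redder : r < wr p0 by rewrite p0_rt.
have [q [[q_min q_red] min_q]] := path_minimiser
  (P := fun x => minimal x /\ r < wr x) wr (fun x x_min => x_min.1.1)
  (ex_intro _ p0 (conj p0_min p0_redder)).
by exists q; split=> // q' q'_min q'_red; apply: min_q.
Qed.

(* p* exists because the all-green path has red weight 0 <= r. *)
Lemma green_optimal_exists :
  0 <= r -> (exists p, path p && all_green col p) -> exists p, green_optimal p.
Proof.
move=> r_ge0 [pg /andP [pg_path pg_green]].
have pg_red : wr pg <= r by rewrite all_green_wred.
have [p [[p_path p_red] min_p]] := path_minimiser
  (P := fun x => path x /\ wr x <= r) wg (fun x x_path => x_path.1)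
  (ex_intro _ pg (conj pg_path pg_red)).
by exists p; split=> // p' p'_path p'_red; apply: min_p.
Qed.

Lemma delta_path_spec q : delta_path q -> Delta_spec src tgt w col u v r (wr q).
Proof.
case=> q_min q_red min_q; split; first by exists q.
by move=> y [q' [q'_min [q'_red <-]]]; apply: min_q.
Qed.

Section OptimalPaths.
Variables (qs ps : seq E).
Hypotheses (qs_delta : delta_path qs) (ps_opt : green_optimal ps).

(* qs is strictly greener than ps, otherwise ps would dominate it. *)
Lemma delta_path_greener : wg qs < wg ps.
Proof.
case: qs_delta ps_opt => -[_ not_dom] qs_red _ [ps_path ps_red _].
rewrite ltNge; apply/negP => green_le; apply: not_dom.
by exists ps; split=> //; split; [lra | split=> //; left; lra].
Qed.

(* Since ps is no redder than r < wred qs, some red edge of qs is off ps. *)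
Lemma red_edge_off_optimal : exists2 e, e \in qs & is_red (col e) && (e \notin ps).
Proof.
case: qs_delta ps_opt => -[qs_path _] qs_red _ [ps_path ps_red _].
apply/hasP; apply: contraTT qs_red => /hasPn off_ps; rewrite -leNgt.
apply: le_trans ps_red; apply: wred_le_red_subset; rewrite ?path_uniq //.
by move=> e e_qs e_red; move: (off_ps e e_qs); rewrite e_red negbK.
Qed.

(* No path greener than ps is lighter in red than qs: the minimal path below
   it is either no redder than r (contradicting the choice of ps) or redder
   than r (and then no lighter than qs by the choice of qs). *)
Lemma delta_path_least_greener q : path q -> wg q < wg ps -> wr qs <= wr q.
Proof.
case: ps_opt qs_delta => _ _ min_ps [_ _ min_qs] q_path q_green.
have [q' [q'_min q'_red q'_green]] := minimal_below q_path.
have [q'_le|q'_gt] := lerP (wr q') r.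
- by have := min_ps q' q'_min.1 q'_le; lra.
- exact: le_trans (min_qs q' q'_min q'_gt) q'_red.
Qed.

Variable e : E.
Hypotheses (e_qs : e \in qs) (e_ps : e \notin ps).

(* ps avoids e, so it realises g_r for e. *)
Lemma g_spec_optimal : g_spec src tgt w col u v e r (wg ps).
Proof.
case: ps_opt => ps_path ps_red min_ps; split; first by exists ps.
by move=> y [p' [p'_path [_ [p'_red <-]]]]; apply: min_ps.
Qed.

Lemma Delta_e_delta_path : Delta_e_spec src tgt w col u v e r (Some (wr qs)).
Proof.
exists (wg ps); split; first exact: g_spec_optimal.
split.
  exists qs; split; first by case: qs_delta => -[].
  by split=> //; split=> //; exact: delta_path_greener.
by move=> y [q [q_path [_ [q_green <-]]]]; exact: delta_path_least_greener.
Qed.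

End OptimalPaths.
End WeightedPaths.

Theorem lemma5 (R : realFieldType) (V E : finType) (src tgt : E -> V)
    (w : E -> R) (col : E -> colour) (u v : V)
    (w_pos : forall e, 0 < w e)
    (green_path : exists p, is_path src tgt u v p && all_green col p)
    (red_path : exists p, is_path src tgt u v p && all_red col p)
    (rtot : R) (Hrtot : rtot_spec src tgt w col u v rtot)
    (r : R) (r_ge0 : 0 <= r) (r_lt : r < rtot) :
  exists (d : R) (e : E),
    Delta_spec src tgt w col u v r d /\ is_red (col e) /\
    Delta_e_spec src tgt w col u v e r (Some d).
Proof.
have [qs qs_delta] := delta_path_exists w_pos Hrtot r_lt.
have [ps ps_opt] := green_optimal_exists w r_ge0 green_path.
have [e e_qs /andP [e_red e_ps]] := red_edge_off_optimal w_pos qs_delta ps_opt.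
exists (wred w col qs), e; split; first exact: delta_path_spec qs_delta.
by split=> //; exact: Delta_e_delta_path qs_delta ps_opt e e_qs e_ps.
Qed.
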